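(* Let $\mathcal{X},\mathcal{A}$ be finite sets and $P_{A|X}$ a channel. There is a function $\varepsilon(n)\to0$ as $n\to\infty$ (depending only on $|\mathcal{X}|,|\mathcal{A}|$) such that for every $n$ and every list-decoding $(n,2^{nR},2^{nR_L},2^{-n\zeta})$-code for $P_{A|X}$, $$\zeta\ge\min_{Q_{XA}}\Big(D(Q_{A|X}\|P_{A|X}\mid Q_X)+\max\{R-R_L-I(X;A)_Q,\,0\}\Big)-\varepsilon(n),$$ the minimum being over probability distributions $Q_{XA}$ on $\mathcal{X}\times\mathcal{A}$.
   Context: Logarithms are base $2$; $[N]=\{0,\dots,N-1\}$; $P^{\times n}_{A|X}(a^n|x^n)=\prod_i P_{A|X}(a_i|x_i)$. A list-decoding $(n,2^{nR},L,\alpha)$-code consists of $\mathrm{Enc}\colon[2^{nR}]\to\mathcal{X}^n$ and a decoder assigning to each $a^n\in\mathcal{A}^n$ a subset $C_{a^n}\subseteq[2^{nR}]$ of size $L$, such that for all $m\in[2^{nR}]$, $\sum_{a^n: C_{a^n}\ni m}P^{\times n}_{A|X}(a^n|\mathrm{Enc}(m))\ge\alpha$. $I(X;A)_Q=H(X)_Q+H(A)_Q-H(X,A)_Q$; $D(Q_{A|X}\|P_{A|X}\mid Q_X)=\sum_x Q_X(x)\sum_a Q_{A|X}(a|x)\log\frac{Q_{A|X}(a|x)}{P_{A|X}(a|x)}$. *)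

From HB Require Import structures.
From mathcomp Require Import all_boot all_order all_algebra.
From mathcomp Require Import all_classical all_reals.
From mathcomp Require Import all_analysis.
Import numFieldNormedType.Exports.
Set Implicit Arguments. Unset Strict Implicit. Unset Printing Implicit Defensive.
Import Order.TTheory GRing.Theory Num.Theory.
Local Open Scope ring_scope.
Local Open Scope classical_set_scope.

Section InfoDefs.
Variable R : realType.

Definition log2 (x : R) : R := ln x / ln 2.

Definition is_channel (X A : finType) (P : X -> A -> R) : Prop :=
  (forall x a, 0 <= P x a) /\ (forall x, \sum_(a : A) P x a = 1).

Definition is_dist (T : finType) (Q : {ffun T -> R}) : Prop :=
  (forall t, 0 <= Q t) /\ \sum_(t : T) Q t = 1.

Definition entropy (T : finType) (p : T -> R) : R :=
  - \sum_(t : T) (if p t == 0 then 0 else p t * log2 (p t)).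

Definition margX (X A : finType) (Q : {ffun X * A -> R}) (x : X) : R :=
  \sum_(a : A) Q (x, a).
Definition margA (X A : finType) (Q : {ffun X * A -> R}) (a : A) : R :=
  \sum_(x : X) Q (x, a).

Definition mutinfo (X A : finType) (Q : {ffun X * A -> R}) : R :=
  entropy (margX Q) + entropy (margA Q) - entropy Q.

Definition condQ (X A : finType) (Q : {ffun X * A -> R}) (x : X) (a : A) : R :=
  Q (x, a) / margX Q x.

Definition klterm (q p : R) : \bar R :=
  if q == 0 then 0%E else if p == 0 then +oo%E else (q * log2 (q / p))%:E.

Definition condKL (X A : finType) (Q : {ffun X * A -> R}) (P : X -> A -> R)
  : \bar R :=
  (\sum_(x : X) (margX Q x)%:E * \sum_(a : A) klterm (condQ Q x a) (P x a))%E.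

Definition sp_objective (X A : finType) (P : X -> A -> R) (Rate RL : R)
  (Q : {ffun X * A -> R}) : \bar R :=
  (condKL Q P + (Num.max (Rate - RL - mutinfo Q) 0)%:E)%E.

(* min over Q_{XA} (taken as an infimum over the probability simplex,
   which is attained) *)
Definition sp_min (X A : finType) (P : X -> A -> R) (Rate RL : R) : \bar R :=
  ereal_inf [set sp_objective P Rate RL Q | Q in [set Q | is_dist Q]].

Definition is_list_code (X A : finType) (P : X -> A -> R) (n M L : nat)
  (alpha : R) (Enc : 'I_M -> {ffun 'I_n -> X})
  (dec : {ffun 'I_n -> A} -> {set 'I_M}) : Prop :=
  (forall an, #|dec an| = L) /\
  (forall m : 'I_M,
     alpha <= \sum_(an : {ffun 'I_n -> A} | m \in dec an)
                \prod_(i < n) P (Enc m i) (an i)).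

End InfoDefs.
Arguments is_list_code {R X A} P n M L alpha Enc dec.

From HB Require Import structures.
From mathcomp Require Import all_boot all_order all_algebra.
From mathcomp Require Import all_classical all_reals.
From mathcomp Require Import all_analysis.
From mathcomp Require Import ring lra.
Import numFieldNormedType.Exports.
Import Order.TTheory GRing.Theory Num.Theory.
Local Open Scope classical_set_scope.
Local Open Scope ring_scope.
Set Implicit Arguments.
Unset Strict Implicit.

(* Let W be the joint law of a uniform message m and the channel output a^n
   conditioned on m being in the decoded list, and Q the law of the letter
   pair (Enc m i, a_i) for (m, a^n) ~ W and i uniform. The per-letter
   log-ratios log (Q_{A|X} / P) and log (Q_A / P) average under Q to
   D(Q_{A|X} || P | Q_X) and D(Q_{A|X} || P | Q_X) - I(X;A)_Q. Since
   W <= P^n / (M 2^{-n zeta}), Gibbs' inequality for W against the product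
   measures prod_i Q_{A|X} (total mass at most M) and prod_i Q_A (mass L on
   the decoded pairs) bounds n times these by n zeta and n (R_L - R + zeta).
   So the bound holds with eps = 0. *)

Section Log2.
Variable R : realType.

Lemma ln2_gt0 : 0 < ln (2 : R).
Proof. by rewrite ln_gt0 // ltr1n. Qed.

Lemma log2M (x y : R) : 0 < x -> 0 < y -> log2 (x * y) = log2 x + log2 y.
Proof. by move=> x0 y0; rewrite /log2 lnM ?posrE // mulrDl. Qed.

Lemma log2_div (x y : R) : 0 < x -> 0 < y -> log2 (x / y) = log2 x - log2 y.
Proof. by move=> x0 y0; rewrite /log2 ln_div ?posrE // mulrBl. Qed.

Lemma log2_prod (I : finType) (F : I -> R) :
  (forall i, 0 < F i) -> log2 (\prod_i F i) = \sum_i log2 (F i).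
Proof.
move=> F_gt0; rewrite /log2 -mulr_suml; congr (_ / _).
suff [] : 0 < \prod_i F i /\ ln (\prod_i F i) = \sum_i ln (F i) by [].
apply: (big_rec2 (fun s p => 0 < p /\ ln p = s)); first by rewrite ln1.
by move=> i s p _ [p_gt0 <-]; rewrite mulr_gt0 // lnM ?posrE.
Qed.

Lemma log2_powR2 (x : R) : log2 (2 `^ x) = x.
Proof. by rewrite /log2 ln_powR mulfK // gt_eqF // ln2_gt0. Qed.

Lemma ler_log2 (x y : R) : 0 < x -> 0 < y -> (log2 x <= log2 y) = (x <= y).
Proof. by move=> x0 y0; rewrite ler_pM2r ?invr_gt0 ?ln2_gt0 // ler_ln ?posrE. Qed.

Lemma mulr_log2_ratio_le (w y : R) : 0 < w -> 0 < y ->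
  w * (log2 y - log2 w) <= (y - w) / ln 2.
Proof.
move=> w0 y0; rewrite -log2_div // /log2 mulrA ler_pM2r ?invr_gt0 ?ln2_gt0 //.
have := expR_ge1Dx (ln (y / w)); rewrite lnK ?posrE ?divr_gt0 // => le_ln.
have := ler_wpM2l (ltW w0) le_ln.
by rewrite mulrDr mulr1 [w * (y / w)]mulrC divfK ?gt_eqF //; lra.
Qed.

End Log2.

Lemma ler_sum_term (R : numDomainType) (I : finType) (F : I -> R) j :
  (forall i, 0 <= F i) -> F j <= \sum_i F i.
Proof. by move=> F_ge0; rewrite (bigD1 j) //= lerDl sumr_ge0. Qed.

Lemma ler_sum_subset (R : numDomainType) (I : finType) (P Q : pred I) (F : I -> R) :
  (forall i, P i -> Q i) -> (forall i, Q i -> 0 <= F i) ->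
  \sum_(i | P i) F i <= \sum_(i | Q i) F i.
Proof.
move=> PQ F_ge0; rewrite big_mkcond [X in _ <= X]big_mkcond /=.
apply: ler_sum => i _; case: ifP => [/PQ -> //|_].
by case: ifP => // /F_ge0.
Qed.

Lemma gibbs_log2 (R : realType) (I : finType) (w c : I -> R) (K : R) :
  (forall i, 0 <= w i) -> \sum_i w i = 1 ->
  (forall i, w i != 0 -> 0 < c i) -> \sum_(i | w i != 0) c i <= K ->
  \sum_i w i * (log2 (c i) - log2 (w i)) <= log2 K.
Proof.
move=> w_ge0 w_sum1 c_gt0 c_sum.
have [i0 /andP[_ wi0]] : exists i, true && (0 < w i).
  by apply: psumr_neq0P => [i _|]; rewrite ?w_ge0 // w_sum1; apply/eqP/oner_neq0.
have c_sum_gt0 : 0 < \sum_(i | w i != 0) c i.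
  rewrite (bigD1 i0) ?lt0r_neq0 //= ltr_pwDl ?c_gt0 ?lt0r_neq0 //.
  by rewrite sumr_ge0 // => i /andP[/c_gt0/ltW].
have K0 : 0 < K by apply: lt_le_trans c_sum.
have term i : w i * (log2 (c i) - log2 (w i))
    <= (if w i != 0 then c i / K else 0) / ln 2 - w i / ln 2 + w i * log2 K.
  have [->|wi] := eqVneq (w i) 0; first by rewrite !(mul0r, mulr0) subr0 addr0.
  have w0 : 0 < w i by rewrite lt_def wi w_ge0.
  have := mulr_log2_ratio_le w0 (divr_gt0 (c_gt0 _ wi) K0).
  rewrite log2_div ?c_gt0 //= !mulrBr; lra.
apply: le_trans (ler_sum _ (fun i _ => term i)) _.
rewrite !big_split /= sumrN -!mulr_suml -big_mkcond /= -mulr_suml w_sum1 mul1r.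
have : (\sum_(i | w i != 0) c i) / K <= 1 by rewrite ler_pdivrMr // mul1r.
have ln2V_ge0 : 0 <= (ln 2)^-1 :> R by rewrite invr_ge0 ltW // ln2_gt0.
move=> /(ler_wpM2r ln2V_ge0); lra.
Qed.

Section SingleLetter.
Variables (R : realType) (X A J : finType) (n : nat).
Variables (mu : J -> R) (xs : J -> 'I_n -> X) (ys : J -> 'I_n -> A).
Hypothesis mu_ge0 : forall j, 0 <= mu j.

Definition single_letter : {ffun X * A -> R} :=
  [ffun t => n%:R^-1 * \sum_j mu j * \sum_i ((xs j i, ys j i) == t)%:R].

Lemma single_letterE (F : X * A -> R) :
  \sum_t single_letter t * F t = n%:R^-1 * \sum_j mu j * \sum_i F (xs j i, ys j i).
Proof.
under eq_bigr do rewrite ffunE -mulrA mulr_suml.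
rewrite -mulr_sumr exchange_big; congr (_ * _); apply: eq_bigr => j _.
under eq_bigr do rewrite -mulrA mulr_suml.
rewrite -mulr_sumr exchange_big; congr (_ * _); apply: eq_bigr => i _.
rewrite (bigD1 (xs j i, ys j i)) //= eqxx mul1r big1 ?addr0 // => t /negbTE.
by rewrite eq_sym => ->; rewrite mul0r.
Qed.

Lemma single_letter_ge0 t : 0 <= single_letter t.
Proof.
rewrite ffunE mulr_ge0 ?invr_ge0 ?ler0n // sumr_ge0 // => j _.
by rewrite mulr_ge0 // sumr_ge0.
Qed.

Lemma single_letter_dist : (0 < n)%N -> \sum_j mu j = 1 -> is_dist single_letter.
Proof.
move=> n_gt0 mu_sum1; split; first exact: single_letter_ge0.
have := single_letterE (fun=> 1); under eq_bigr do rewrite mulr1; move=> ->.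
under eq_bigr do rewrite sumr_const card_ord.
by rewrite -mulr_suml mu_sum1 mul1r mulVf // pnatr_eq0 -lt0n.
Qed.

Lemma single_letter_gt0 j i : mu j != 0 -> 0 < single_letter (xs j i, ys j i).
Proof.
move=> mu_neq0; rewrite ffunE mulr_gt0 ?invr_gt0 ?ltr0n ?(leq_ltn_trans _ (ltn_ord i)) //.
rewrite (bigD1 j) //= ltr_pwDl ?sumr_ge0 // => [|k _]; last first.
  by rewrite mulr_ge0 // sumr_ge0.
rewrite mulr_gt0 //; first by rewrite lt_def mu_neq0 mu_ge0.
by rewrite (bigD1 i) //= eqxx ltr_pwDl ?ltr01 ?sumr_ge0.
Qed.

Lemma single_letter_abs_cont (P : X -> A -> R) :
  (forall j, mu j != 0 -> forall i, 0 < P (xs j i) (ys j i)) ->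
  forall x a, P x a = 0 -> single_letter (x, a) = 0.
Proof.
move=> P_gt0 x a Pxa0; rewrite ffunE big1 ?mulr0 // => j _.
have [-> |/P_gt0 Pj_gt0] := eqVneq (mu j) 0; first by rewrite mul0r.
rewrite big1 ?mulr0 // => i _; case: eqP => // -[xj yj].
by move: (Pj_gt0 i); rewrite xj yj Pxa0 ltxx.
Qed.

Lemma single_letter_log2_ratio (phi psi : X * A -> R) :
  (forall j, mu j != 0 -> forall i,
     0 < phi (xs j i, ys j i) /\ 0 < psi (xs j i, ys j i)) ->
  \sum_t single_letter t * log2 (phi t / psi t) =
  n%:R^-1 * \sum_j mu j * (log2 (\prod_i phi (xs j i, ys j i))
                           - log2 (\prod_i psi (xs j i, ys j i))).
Proof.
move=> pos; rewrite single_letterE; congr (_ * _); apply: eq_bigr => j _.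
have [->|/pos {}pos] := eqVneq (mu j) 0; first by rewrite !mul0r.
rewrite !log2_prod -?sumrB; try by move=> i; case: (pos i).
by congr (_ * _); apply: eq_bigr => i _; case: (pos i) => *; rewrite log2_div.
Qed.

End SingleLetter.

(* The value of [condKL Q P] when Q is absolutely continuous w.r.t. P
   (condKLE). *)
Definition condKLr (R : realType) (X A : finType) (Q : {ffun X * A -> R})
  (P : X -> A -> R) : R :=
  \sum_t Q t * log2 (condQ Q t.1 t.2 / P t.1 t.2).

Lemma entropyE (R : realType) (T : finType) (p : T -> R) :
  entropy p = - \sum_t p t * log2 (p t).
Proof. by congr (- _); apply: eq_bigr => t _; case: eqP => // ->; rewrite mul0r. Qed.

Section Divergence.
Variables (R : realType) (X A : finType) (Q : {ffun X * A -> R}) (P : X -> A -> R).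
Hypothesis Q_ge0 : forall t, 0 <= Q t.

Lemma margX_ge x a : Q (x, a) <= margX Q x.
Proof. exact: (ler_sum_term (F := fun a => Q (x, a)) a (fun a => Q_ge0 _)). Qed.

Lemma margA_ge x a : Q (x, a) <= margA Q a.
Proof. exact: (ler_sum_term (F := fun x => Q (x, a)) x (fun x => Q_ge0 _)). Qed.

Lemma condQ_ge0 x a : 0 <= condQ Q x a.
Proof. by rewrite divr_ge0 ?sumr_ge0. Qed.

Lemma sum_condQ_le1 x : \sum_a condQ Q x a <= 1.
Proof.
rewrite -mulr_suml -/(margX Q x).
have [->|mx] := eqVneq (margX Q x) 0; first by rewrite mul0r ler01.
by rewrite divff.
Qed.

Lemma sum_margA : \sum_t Q t = 1 -> \sum_a margA Q a = 1.
Proof. by move=> <-; rewrite /margA exchange_big pair_bigA; apply: eq_bigr => -[]. Qed.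

Hypothesis abs_cont : forall x a, P x a = 0 -> Q (x, a) = 0.

Lemma condKLE : condKL Q P = (condKLr Q P)%:E.
Proof.
have -> : condKLr Q P = \sum_x \sum_a Q (x, a) * log2 (condQ Q x a / P x a).
  by rewrite pair_bigA; apply: eq_bigr => -[].
rewrite /condKL -sumEFin; apply: eq_bigr => x _.
have [mx0|mx] := eqVneq (margX Q x) 0.
  rewrite mx0 mul0e big1 // => a _.
  by rewrite (psumr_eq0P (fun a _ => Q_ge0 (x, a)) mx0) // mul0r.
have kl a : klterm (condQ Q x a) (P x a) = (condQ Q x a * log2 (condQ Q x a / P x a))%:E.
  rewrite /klterm; case: eqP => [->|cQ]; first by rewrite mul0r.
  by case: eqP => // /abs_cont Q0; case: cQ; rewrite /condQ Q0 mul0r.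
under eq_bigr do rewrite kl.
rewrite sumEFin -EFinM mulr_sumr; congr EFin; apply: eq_bigr => a _.
by rewrite mulrA /condQ [margX Q x * _]mulrC divfK.
Qed.

Lemma sp_objective_le (Rate RL zeta : R) :
  condKLr Q P <= zeta -> condKLr Q P - mutinfo Q <= RL - Rate + zeta ->
  (sp_objective P Rate RL Q <= zeta%:E)%E.
Proof.
move=> D_le DI_le; rewrite /sp_objective condKLE -EFinD lee_fin.
by case: (leP (Rate - RL - mutinfo Q) 0) => _; rewrite ?addr0 //; lra.
Qed.

Hypothesis P_ge0 : forall x a, 0 <= P x a.

Lemma condKLr_sub_mutinfo :
  condKLr Q P - mutinfo Q = \sum_t Q t * log2 (margA Q t.2 / P t.1 t.2).
Proof.
have split_log t : Q t * log2 (margA Q t.2 / P t.1 t.2) =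
    Q t * log2 (condQ Q t.1 t.2 / P t.1 t.2) + Q t * log2 (margX Q t.1)
    + Q t * log2 (margA Q t.2) - Q t * log2 (Q t).
  case: t => x a /=; have [->|Q_neq0] := eqVneq (Q (x, a)) 0.
    by rewrite !mul0r !addr0 subr0.
  have Q_gt0 : 0 < Q (x, a) by rewrite lt_def Q_neq0 Q_ge0.
  have mX_gt0 := lt_le_trans Q_gt0 (margX_ge x a).
  have mA_gt0 := lt_le_trans Q_gt0 (margA_ge x a).
  have P_gt0 : 0 < P x a.
    by rewrite lt_def P_ge0 andbT; apply: contra Q_neq0 => /eqP/abs_cont ->.
  by rewrite /condQ !log2_div ?divr_gt0 //; ring.
have margX_term : \sum_x margX Q x * log2 (margX Q x) = \sum_t Q t * log2 (margX Q t.1).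
  transitivity (\sum_x \sum_a Q (x, a) * log2 (margX Q x)).
    by apply: eq_bigr => x _; rewrite mulr_suml.
  by rewrite pair_bigA; apply: eq_bigr => -[].
have margA_term : \sum_a margA Q a * log2 (margA Q a) = \sum_t Q t * log2 (margA Q t.2).
  transitivity (\sum_x \sum_a Q (x, a) * log2 (margA Q a)).
    by rewrite exchange_big; apply: eq_bigr => a _; rewrite mulr_suml.
  by rewrite pair_bigA; apply: eq_bigr => -[].
rewrite (eq_bigr _ (fun t _ => split_log t)) !sumrB !big_split /=.
rewrite /mutinfo !entropyE margX_term margA_term /condKLr; lra.
Qed.

End Divergence.

Section ListCode.
Variables (R : realType) (X A : finType) (P : X -> A -> R) (n M L : nat) (alpha : R).
Variables (Enc : 'I_M -> {ffun 'I_n -> X}) (dec : {ffun 'I_n -> A} -> {set 'I_M}).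
Hypotheses (P_ge0 : forall x a, 0 <= P x a) (n_gt0 : (0 < n)%N) (M_gt0 : (0 < M)%N).
Hypotheses (alpha_gt0 : 0 < alpha) (code : is_list_code P n M L alpha Enc dec).

Local Notation word := {ffun 'I_n -> A}.

Definition likelihood m (an : word) := \prod_i P (Enc m i) (an i).

Definition success m := \sum_(an | m \in dec an) likelihood m an.

(* This is W; each message keeps total mass 1/M. *)
Definition decoded_joint (j : 'I_M * word) :=
  if j.1 \in dec j.2 then likelihood j.1 j.2 / (M%:R * success j.1) else 0.

Definition code_type := single_letter decoded_joint (fun j => Enc j.1) (fun j => j.2).

Lemma success_gt0 m : 0 < success m.
Proof. by case: code => _ /(_ m); apply: lt_le_trans. Qed.

Lemma decoded_joint_ge0 j : 0 <= decoded_joint j.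
Proof.
rewrite /decoded_joint; case: ifP => // _.
by rewrite divr_ge0 ?prodr_ge0 // mulr_ge0 ?ler0n // ltW ?success_gt0.
Qed.

Lemma sum_decoded_joint : \sum_j decoded_joint j = 1.
Proof.
have M0 : M%:R != 0 :> R by rewrite pnatr_eq0 -lt0n.
transitivity (\sum_m \sum_an decoded_joint (m, an)).
  by rewrite pair_bigA; apply: eq_bigr => -[].
have row m : \sum_an decoded_joint (m, an) = M%:R^-1.
  rewrite /decoded_joint /= -big_mkcond /= -mulr_suml -/(success m).
  by rewrite [M%:R * _]mulrC invfM mulrA mulfV ?mul1r // gt_eqF ?success_gt0.
by under eq_bigr do rewrite row; rewrite sumr_const card_ord -[_ *+ M]mulr_natr mulVf.
Qed.

Lemma decoded_joint_neq0 j : decoded_joint j != 0 ->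
  j.1 \in dec j.2 /\ forall i, 0 < P (Enc j.1 i) (j.2 i).
Proof.
rewrite /decoded_joint /likelihood; case: ifP => [jdec|]; last by rewrite eqxx.
rewrite mulf_eq0 negb_or => /andP[lik_neq0 _]; split => // i.
rewrite lt_def P_ge0 andbT; apply: contra lik_neq0 => /eqP P0.
by apply/prodf_eq0; exists i => //; apply/eqP.
Qed.

Lemma decoded_joint_gibbs (c : 'I_M * word -> R) (K : R) :
  (forall j, 0 <= c j) -> (forall j, decoded_joint j != 0 -> 0 < c j) ->
  \sum_(j | j.1 \in dec j.2) c j <= K ->
  \sum_j decoded_joint j * (log2 (c j) - log2 (likelihood j.1 j.2))
    <= log2 K - log2 M%:R - log2 alpha.
Proof.
move=> c_ge0 c_gt0 c_sum.
have support_sum : \sum_(j | decoded_joint j != 0) c j <= K.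
  by apply: le_trans c_sum; apply: ler_sum_subset => // j /decoded_joint_neq0[].
have gibbs := gibbs_log2 decoded_joint_ge0 sum_decoded_joint c_gt0 support_sum.
have term j : decoded_joint j * (log2 (c j) - log2 (likelihood j.1 j.2)) <=
    decoded_joint j * (log2 (c j) - log2 (decoded_joint j))
    + decoded_joint j * (- log2 M%:R - log2 alpha).
  have [->|dj_neq0] := eqVneq (decoded_joint j) 0; first by rewrite !mul0r addr0.
  have dj_gt0 : 0 < decoded_joint j by rewrite lt_def dj_neq0 decoded_joint_ge0.
  have [jdec P_gt0] := decoded_joint_neq0 dj_neq0.
  have succ_gt0 := success_gt0 j.1.
  have M_pos : 0 < M%:R :> R by rewrite ltr0n.
  have lik : likelihood j.1 j.2 = decoded_joint j * M%:R * success j.1.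
    by rewrite /decoded_joint jdec -mulrA divfK // gt_eqF // mulr_gt0.
  have alpha_le : log2 alpha <= log2 (success j.1).
    by rewrite ler_log2 //; case: code => _ /(_ j.1).
  rewrite -mulrDr ler_wpM2l ?decoded_joint_ge0 // lik !log2M ?mulr_gt0 //; lra.
apply: le_trans (ler_sum _ (fun j _ => term j)) _.
by rewrite big_split /= -mulr_suml sum_decoded_joint mul1r; lra.
Qed.

Lemma code_type_ge0 t : 0 <= code_type t.
Proof. exact: single_letter_ge0 decoded_joint_ge0 t. Qed.

Lemma code_type_dist : is_dist code_type.
Proof. exact: single_letter_dist decoded_joint_ge0 n_gt0 sum_decoded_joint. Qed.

Lemma code_type_abs_cont x a : P x a = 0 -> code_type (x, a) = 0.
Proof. by apply: single_letter_abs_cont => j /decoded_joint_neq0[]. Qed.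

Lemma code_type_letter_gt0 j i :
  decoded_joint j != 0 -> 0 < code_type (Enc j.1 i, j.2 i).
Proof.
by move=> dj; apply: (single_letter_gt0 (fun j => Enc j.1) (fun j : 'I_M * word => j.2)
  decoded_joint_ge0 i dj).
Qed.

Lemma code_type_log2_ratio (phi : X * A -> R) :
  (forall j, decoded_joint j != 0 -> forall i, 0 < phi (Enc j.1 i, j.2 i)) ->
  n%:R * \sum_t code_type t * log2 (phi t / P t.1 t.2) =
  \sum_j decoded_joint j * (log2 (\prod_i phi (Enc j.1 i, j.2 i))
                            - log2 (likelihood j.1 j.2)).
Proof.
move=> phi_gt0.
rewrite (single_letter_log2_ratio (psi := fun t => P t.1 t.2)) => [|j dj i].
  by rewrite mulrA mulfV ?mul1r // pnatr_eq0 -lt0n.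
by split; [exact: phi_gt0 | exact: (decoded_joint_neq0 dj).2].
Qed.

Lemma code_type_condKL : n%:R * condKLr code_type P <= - log2 alpha.
Proof.
have condQ_gt0 j i : decoded_joint j != 0 ->
    0 < condQ code_type (Enc j.1 i) (j.2 i).
  move=> dj; have Q_gt0 := code_type_letter_gt0 i dj.
  by rewrite divr_gt0 // (lt_le_trans Q_gt0 (margX_ge code_type_ge0 _ _)).
set c := fun j : 'I_M * word => \prod_i condQ code_type (Enc j.1 i) (j.2 i).
have c_ge0 j : 0 <= c j by apply: prodr_ge0 => i _; exact: (condQ_ge0 code_type_ge0).
have c_sum : \sum_(j | j.1 \in dec j.2) c j <= M%:R.
  apply: le_trans (ler_sum_subset (Q := xpredT) _ (fun j _ => c_ge0 j)) _ => //.
  rewrite -(pair_bigA _ (fun m an => c (m, an))) /=.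
  apply: (@le_trans _ _ (\sum_(m < M) 1)); last by rewrite sumr_const card_ord.
  apply: ler_sum => m _; rewrite -(bigA_distr_bigA (fun i a => condQ code_type (Enc m i) a)).
  apply: prodr_ile1 => i _; rewrite sumr_ge0 => [|a _]; last exact: (condQ_ge0 code_type_ge0).
  exact: sum_condQ_le1.
have c_gt0 j : decoded_joint j != 0 -> 0 < c j.
  by move=> dj; apply: prodr_gt0 => i _; exact: condQ_gt0.
have := decoded_joint_gibbs c_ge0 c_gt0 c_sum.
rewrite subrr sub0r; apply: le_trans.
rewrite /condKLr (code_type_log2_ratio (phi := fun t => condQ code_type t.1 t.2)) //.
by move=> j dj i; exact: condQ_gt0.
Qed.

Lemma code_type_mutinfo :
  n%:R * (condKLr code_type P - mutinfo code_type)
    <= log2 L%:R - log2 M%:R - log2 alpha.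
Proof.
rewrite (condKLr_sub_mutinfo code_type_ge0 code_type_abs_cont P_ge0).
have margA_gt0 j i : decoded_joint j != 0 -> 0 < margA code_type (j.2 i).
  move=> dj; apply: lt_le_trans (code_type_letter_gt0 i dj) _.
  exact: (margA_ge code_type_ge0).
set c := fun j : 'I_M * word => \prod_i margA code_type (j.2 i).
have c_ge0 j : 0 <= c j.
  by apply: prodr_ge0 => i _; apply: sumr_ge0 => x _; exact: code_type_ge0.
have c_gt0 j : decoded_joint j != 0 -> 0 < c j.
  by move=> dj; apply: prodr_gt0 => i _; exact: margA_gt0.
have c_sum : \sum_(j | j.1 \in dec j.2) c j = L%:R.
  rewrite big_mkcond -(pair_bigA _ (fun m an => if m \in dec an then c (m, an) else 0)).
  rewrite exchange_big /c /=.
  under eq_bigr => an _ do rewrite -big_mkcond /= sumr_const (proj1 code).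
  rewrite sumrMnl -(bigA_distr_bigA (fun i a => margA code_type a)) /=.
  under eq_bigr do rewrite (sum_margA (proj2 code_type_dist)).
  by rewrite big1.
have c_le : \sum_(j | j.1 \in dec j.2) c j <= L%:R by rewrite c_sum.
have := decoded_joint_gibbs c_ge0 c_gt0 c_le; apply: le_trans.
rewrite (code_type_log2_ratio (phi := fun t => margA code_type t.2)) //.
by move=> j dj i; exact: margA_gt0.
Qed.

End ListCode.

Theorem mainTheorem5 (R : realType) (kX kA : nat) :
  exists eps : nat -> R,
    eps @ \oo --> (0 : R) /\
    forall (X A : finType), #|X| = kX -> #|A| = kA ->
    forall (P : X -> A -> R), is_channel P ->
    forall (n M L : nat) (Rate RL zeta : R)
           (Enc : 'I_M -> {ffun 'I_n -> X})
           (dec : {ffun 'I_n -> A} -> {set 'I_M}),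
      (0 < n)%N ->
      (M%:R : R) = 2 `^ (n%:R * Rate) ->
      (L%:R : R) = 2 `^ (n%:R * RL) ->
      is_list_code P n M L (2 `^ (- (n%:R * zeta))) Enc dec ->
      (sp_min P Rate RL - (eps n)%:E <= zeta%:E)%E.
Proof.
exists (fun=> 0); split; first exact: cvg_cst.
move=> X A _ _ P [P_ge0 _] n M L Rate RL zeta Enc dec n_gt0 HM HL code.
have M_gt0 : (0 < M)%N by rewrite -(ltr0n R) HM powR_gt0.
have alpha_gt0 : 0 < 2 `^ (- (n%:R * zeta)) :> R by rewrite powR_gt0.
have n_pos : 0 < n%:R :> R by rewrite ltr0n.
have D_le := code_type_condKL P_ge0 n_gt0 M_gt0 alpha_gt0 code.
have DI_le := code_type_mutinfo P_ge0 n_gt0 M_gt0 alpha_gt0 code.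
rewrite HM HL !log2_powR2 opprK in D_le DI_le.
rewrite sube0; apply: le_trans (ereal_inf_lbound _) _.
  by exists (code_type P Enc dec); first exact: code_type_dist P_ge0 n_gt0 M_gt0 alpha_gt0 code.
apply: sp_objective_le.
- exact: code_type_ge0 P_ge0 alpha_gt0 code.
- exact: code_type_abs_cont.
- by rewrite -(ler_pM2l n_pos).
- rewrite -(ler_pM2l n_pos); lra.
Qed.
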